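(* For $M=2$ there exist unitary operators $S,T$ on $\mathcal{H}_2\otimes\mathcal{H}_2$ such that $S\bar{Q}_fT=U_f$ for both permutations $f$ of $\mathbb{Z}_2$. For every integer $M\ge3$ there do not exist unitary operators $S,T$ on $\mathcal{H}_M\otimes\mathcal{H}_M$ such that $S\bar{Q}_fT=U_f$ for every permutation $f$ of $\mathbb{Z}_M$.
   Context: $\mathcal{H}_M$ is an $M$-dimensional Hilbert space with orthonormal basis $\{|x\rangle\}_{x\in\mathbb{Z}_M}$. For a permutation $f$ of $\mathbb{Z}_M$: the standard oracle operator is $U_f$ on $\mathcal{H}_M\otimes\mathcal{H}_M$ with $U_f|x\rangle\otimes|y\rangle=|x\rangle\otimes|y\oplus f(x)\rangle$ ($\oplus$ addition mod $M$); the minimal oracle operator is $Q_f$ on $\mathcal{H}_M$ with $Q_f|x\rangle=|f(x)\rangle$; the entanglement-assisted minimal oracle operator is $\bar{Q}_f=Q_f\otimes\mathbb{1}_M$. *)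

(* Operators on H_M (x) H_M are (M*M)x(M*M) matrices over an
   arbitrary numClosedFieldType C (covers the complex numbers). The basis
   vector |x> (x) |y> is index mxtens_index (x, y); column b of a matrix is the
   image of basis vector b. *)
From HB Require Import structures.
From mathcomp Require Import all_boot all_order all_algebra all_fingroup.
From mathcomp Require Import spectral.
From mathcomp Require Import mxtens.
Set Implicit Arguments. Unset Strict Implicit. Unset Printing Implicit Defensive.
Import Order.TTheory GRing.Theory Num.Theory.
Local Open Scope ring_scope.

Section Oracles.
Variable C : numClosedFieldType.
Variable M : nat.

Definition addM_eq (z y w : 'I_M) : bool := val z == ((val y + val w) %% M)%N.

(* standard oracle: U_f |x>|y> = |x>|y (+) f x> *)
Definition Uop (f : {perm 'I_M}) : 'M[C]_(M * M) :=
  \matrix_(i, j)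
    (((mxtens_unindex i).1 == (mxtens_unindex j).1)
     && addM_eq (mxtens_unindex i).2 (mxtens_unindex j).2
                (f (mxtens_unindex j).1))%:R.

Definition Qop (f : {perm 'I_M}) : 'M[C]_M :=
  \matrix_(i, j) (i == f j)%:R.

Definition Qbar (f : {perm 'I_M}) : 'M[C]_(M * M) := Qop f *t (1%:M : 'M[C]_M).

End Oracles.

(* All the operators involved are permutation matrices of the basis |x>|y>.
   Since Q_f Q_g = Q_(f o g), a simulation S Q_f T = U_f forces
   U_f W U_g = U_(f o g) with W = T^-1 S^-1; taking f = g = 1 gives
   W = U_1^-1, and reading off the image of |x>|0> then yields
   f (g x) = f x - x + g x for all permutations f, g.  For M >= 3 the
   transpositions (0 1) and (1 2) violate this at x = 1.  For M = 2 every
   permutation is a translation z |-> z + c, and then U_f is Q_f (x) 1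
   conjugated by |x>|y> |-> |x + y>|x> and the swap. *)
From HB Require Import structures.
From mathcomp Require Import all_boot all_order all_algebra all_fingroup.
From mathcomp Require Import spectral mxtens.
Set Implicit Arguments. Unset Strict Implicit. Unset Printing Implicit Defensive.
Import Order.TTheory GRing.Theory Num.Theory.
Local Open Scope ring_scope.
Local Open Scope sesquilinear_scope.

Section FunMx.
Variables (R : nzRingType) (m n : nat).

Definition fun_mx (h : 'I_m * 'I_n -> 'I_m * 'I_n) : 'M[R]_(m * n) :=
  \matrix_(i, j) (mxtens_unindex i == h (mxtens_unindex j))%:R.

Lemma fun_mxM h k : fun_mx h *m fun_mx k = fun_mx (h \o k).
Proof.
apply/matrixP => i j; rewrite !mxE.
rewrite (bigD1 (mxtens_index (k (mxtens_unindex j)))) //= big1 => [|l ne].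
  by rewrite !mxE mxtens_indexK eqxx mulr1 addr0.
rewrite !mxE; case: (mxtens_unindex l =P _) => [kl | _]; last by rewrite mulr0.
by rewrite -kl mxtens_unindexK eqxx in ne.
Qed.

Lemma eq_fun_mx h k : h =1 k -> fun_mx h = fun_mx k.
Proof. by move=> hk; apply/matrixP => i j; rewrite !mxE hk. Qed.

Lemma fun_mx_id : fun_mx id = 1%:M.
Proof.
by apply/matrixP => i j; rewrite !mxE (can_eq (@mxtens_unindexK m n)).
Qed.

Lemma fun_mx_can h h' : cancel h' h -> fun_mx h *m fun_mx h' = 1%:M.
Proof. by move=> hK; rewrite fun_mxM -fun_mx_id; apply: eq_fun_mx. Qed.

Lemma fun_mx_inj h k : fun_mx h = fun_mx k -> h =1 k.
Proof.
move=> hk p; move/matrixP/(_ (mxtens_index (h p)) (mxtens_index p)): hk.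
rewrite !mxE !mxtens_indexK eqxx.
by case: eqP => // _ /eqP; rewrite oner_eq0.
Qed.

End FunMx.

Lemma fun_mx_unitary (C : numClosedFieldType) m n (h : 'I_m * 'I_n -> _) :
  bijective h -> fun_mx C h \is unitarymx.
Proof.
case=> h' hK h'K; have adj_h : (fun_mx C h)^t* = fun_mx C h'.
  apply/matrixP => i j; rewrite !mxE conjC_nat.
  by congr (nat_of_bool _)%:R; apply/eqP/eqP => [-> | ->].
by apply/unitarymxP; rewrite adj_h fun_mx_can.
Qed.

Section MinimalOracle.
Variables (C : numClosedFieldType) (M : nat).

Lemma Qbar_fun_mx (f : {perm 'I_M}) :
  Qbar C f = fun_mx C (fun p : 'I_M * 'I_M => (f p.1, p.2)).
Proof.
apply/matrixP => i j; rewrite !mxE.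
case: (mxtens_unindex i) => a b; case: (mxtens_unindex j) => c d /=.
by rewrite xpair_eqE -natrM mulnb.
Qed.

Lemma QbarM (f g : {perm 'I_M}) : Qbar C f *m Qbar C g = Qbar C (g * f).
Proof. by rewrite !Qbar_fun_mx fun_mxM; apply: eq_fun_mx => p; rewrite permM. Qed.

End MinimalOracle.

Section StandardOracle.
Variables (C : numClosedFieldType) (n : nat).
Local Notation M := n.+1.

(* The ring 'I_n.+1 adds modulo n.+1, which makes [Uop] literally [fun_mx (ctrl_add f)]. *)
Definition ctrl_add (h : 'I_M -> 'I_M) (p : 'I_M * 'I_M) := (p.1, p.2 + h p.1).

Lemma ctrl_addK h : cancel (ctrl_add h) (ctrl_add (fun x => - h x)).
Proof. by case=> x y; rewrite /ctrl_add addrK. Qed.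

Lemma ctrl_addNK h : cancel (ctrl_add (fun x => - h x)) (ctrl_add h).
Proof. by case=> x y; rewrite /ctrl_add addrNK. Qed.

Lemma Uop_ctrl_add (f : {perm 'I_M}) : Uop C f = fun_mx C (ctrl_add f).
Proof.
apply/matrixP => i j; rewrite !mxE.
by case: (mxtens_unindex i) => a b; case: (mxtens_unindex j).
Qed.

Lemma oracle_simulation_affine (S T : 'M[C]_(M * M)) :
  (forall f, S *m Qbar C f *m T = Uop C f) ->
  forall (f g : {perm 'I_M}) x, f (g x) = f x - x + g x.
Proof.
move=> sim f g x.
pose V := fun_mx C (ctrl_add (fun x => - (1%g : {perm 'I_M}) x)).
have V_Uop1 : V *m Uop C 1 = 1%:M by rewrite Uop_ctrl_add; apply/fun_mx_can/ctrl_addK.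
have Uop1_V : Uop C 1 *m V = 1%:M by rewrite Uop_ctrl_add; apply/fun_mx_can/ctrl_addNK.
have [S_unit T_unit] : S \in unitmx /\ T \in unitmx.
  split; [move: Uop1_V | move: V_Uop1]; rewrite -(sim 1%g).
    by rewrite -!mulmxA => /mulmx1_unit[].
  by rewrite !mulmxA => /mulmx1_unit[].
set W := invmx T *m invmx S.
have UWU (h k : {perm 'I_M}) : Uop C h *m W *m Uop C k = Uop C (k * h).
  by rewrite -!sim -QbarM !mulmxA mulmxK // mulmxKV.
have W_V : W = V.
  transitivity (V *m (Uop C 1 *m W *m Uop C 1) *m V).
    by rewrite !mulmxA V_Uop1 mul1mx -mulmxA Uop1_V mulmx1.
  by rewrite UWU mulg1 V_Uop1 mul1mx.
have := UWU f g; rewrite W_V !Uop_ctrl_add !fun_mxM.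
move=> /fun_mx_inj/(_ (x, 0))/(congr1 snd); cbn [snd fst comp ctrl_add].
by rewrite permM perm1 !add0r => <-; rewrite addrAC [RHS]addrAC [g x + _]addrC.
Qed.

Definition swap (p : 'I_M * 'I_M) := (p.2, p.1).
Definition sum_copy (p : 'I_M * 'I_M) := (p.2 + p.1, p.1).

Lemma swap_bij : bijective swap.
Proof. by exists swap => -[]. Qed.

Lemma sum_copy_bij : bijective sum_copy.
Proof.
exists (fun p => (p.2, p.1 - p.2)) => -[x y]; rewrite /sum_copy /=.
  by rewrite addrK.
by rewrite subrK.
Qed.

Lemma translation_oracle_simulation (f : {perm 'I_M}) :
  (forall z, f z = z + f 0) ->
  fun_mx C swap *m Qbar C f *m fun_mx C sum_copy = Uop C f.
Proof.
move=> f_shift; rewrite Qbar_fun_mx Uop_ctrl_add !fun_mxM.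
apply: eq_fun_mx => -[x y]; rewrite /swap /sum_copy /ctrl_add /comp; cbn [fst snd].
by rewrite (f_shift (y + x)) (f_shift x) addrA.
Qed.

End StandardOracle.

Lemma tperm_comp_not_affine (V : finZmodType) (a b c : V) :
  a != b -> b != c -> a != c ->
  tperm a b (tperm b c b) != tperm a b b - b + tperm b c b.
Proof.
move=> ab bc ac; rewrite tpermL tpermR tpermD //.
by rewrite eq_sym -subr_eq0 addrK subr_eq0.
Qed.

Lemma perm_Z2_shift (f : {perm 'I_2}) z : f z = z + f 0.
Proof.
have : f 1 != f 0 by rewrite (inj_eq perm_inj).
have [-> _ | ->] : z = 0 \/ z = 1 by case: z => -[|[|//]] ?; [left | right]; apply: val_inj.
  by rewrite add0r.
by case: (f 1) (f 0) => -[|[|//]] ? [[|[|//]] ?] //= _; apply: val_inj.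
Qed.

Theorem mainTheorem14 (C : numClosedFieldType) :
  (exists S T : 'M[C]_(2 * 2),
      S \is unitarymx /\ T \is unitarymx /\
      forall f : {perm 'I_2}, S *m Qbar C f *m T = Uop C f) /\
  (forall M : nat, (3 <= M)%N ->
      ~ exists S T : 'M[C]_(M * M),
          S \is unitarymx /\ T \is unitarymx /\
          forall f : {perm 'I_M}, S *m Qbar C f *m T = Uop C f).
Proof.
split.
  exists (fun_mx C (@swap 1)), (fun_mx C (@sum_copy 1)).
  split; first exact/fun_mx_unitary/swap_bij.
  split; first exact/fun_mx_unitary/sum_copy_bij.
  by move=> f; apply/translation_oracle_simulation/perm_Z2_shift.
case=> [|[|[|n]]] // _ [S [T [_ [_ sim]]]].
have := oracle_simulation_affine sim (tperm 0 1) (tperm 1 2) 1.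
by apply/eqP/tperm_comp_not_affine.
Qed.
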